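(* Let $S$ and $T$ be semigroups such that for all $\mathcal{R}$-incomparable elements $u,v\in T$ there exist $a,b\in S$ and a homomorphism $\phi:S\to T$ with $a\phi=u$, $b\phi=v$ and $(aS\cap bS)\phi=uT\cap vT$. If $S$ is right ideal Howson then so is $T$.
   Context: A semigroup $S$ is right ideal Howson if the intersection of any two finitely generated right ideals of $S$ is finitely generated, where a right ideal $I$ is finitely generated if $I=XS^1$ for finite $X\subseteq I$ ($S^1$ is $S$ if $S$ is a monoid, otherwise $S$ with an identity adjoined). Elements $u,v\in T$ are $\mathcal{R}$-incomparable if $u\notin vT^1$ and $v\notin uT^1$. *)

From Stdlib Require Import List.

Definition associative_op {A : Type} (mul : A -> A -> A) : Prop :=
  forall x y z, mul x (mul y z) = mul (mul x y) z.

Definition rmult {A : Type} (mul : A -> A -> A) (x : A) : A -> Prop :=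
  fun y => exists s, y = mul x s.

Definition rmult1 {A : Type} (mul : A -> A -> A) (x : A) : A -> Prop :=
  fun y => y = x \/ rmult mul x y.

Definition is_right_ideal {A : Type} (mul : A -> A -> A) (I : A -> Prop) : Prop :=
  forall x s, I x -> I (mul x s).

Definition fg_right_ideal {A : Type} (mul : A -> A -> A) (I : A -> Prop) : Prop :=
  exists X : list A,
    (forall x, In x X -> I x) /\
    (forall y, I y <-> exists x, In x X /\ rmult1 mul x y).

Definition right_ideal_Howson {A : Type} (mul : A -> A -> A) : Prop :=
  forall I J : A -> Prop,
    fg_right_ideal mul I -> fg_right_ideal mul J ->
    fg_right_ideal mul (fun y => I y /\ J y).

Definition R_incomparable {A : Type} (mul : A -> A -> A) (u v : A) : Prop :=
  ~ rmult1 mul v u /\ ~ rmult1 mul u v.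

Definition is_hom {A B : Type} (mulA : A -> A -> A) (mulB : B -> B -> B)
  (phi : A -> B) : Prop :=
  forall x y, phi (mulA x y) = mulB (phi x) (phi y).

(* A finitely generated right ideal is a finite union of principal ones, so a
   semigroup is right ideal Howson as soon as every intersection uS^1 ∩ vS^1 is
   finitely generated.  In T this is clear when u, v are R-comparable (the
   intersection is principal); otherwise uT^1 ∩ vT^1 = uT ∩ vT is the image
   of aS ∩ bS = aS^1 ∩ bS^1 under phi, and a hom image of generators of
   aS^1 ∩ bS^1 generates it. *)
From Stdlib Require Import List Classical.

Section Semigroup.
Variable A : Type.
Variable mul : A -> A -> A.
Hypothesis assoc : associative_op mul.

Lemma rmult1_trans u x y : rmult1 mul u x -> rmult1 mul x y -> rmult1 mul u y.
Proof.
  intros [-> | [s ->]] [-> | [t ->]].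
  - left; reflexivity.
  - right; exists t; reflexivity.
  - right; exists s; reflexivity.
  - right; exists (mul s t); rewrite assoc; reflexivity.
Qed.

Lemma right_ideal_rmult1 (I : A -> Prop) x y :
  is_right_ideal mul I -> I x -> rmult1 mul x y -> I y.
Proof. intros HI Hx [-> | [s ->]]; [exact Hx | apply HI, Hx]. Qed.

Lemma is_right_ideal_rmult_meet u v :
  is_right_ideal mul (fun y => rmult mul u y /\ rmult mul v y).
Proof.
  intros y t [[s ->] [s' E]]; split.
  - exists (mul s t); rewrite assoc; reflexivity.
  - exists (mul s' t); rewrite E, assoc; reflexivity.
Qed.

Lemma rmult1_meet_incomparable u v y : R_incomparable mul u v ->
  (rmult1 mul u y /\ rmult1 mul v y <-> rmult mul u y /\ rmult mul v y).
Proof.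
  intros [Hvu Huv]; split.
  - intros [[-> | Ru] [Ev | Rv]].
    + subst; exfalso; apply Hvu; left; reflexivity.
    + exfalso; apply Hvu; right; exact Rv.
    + subst; exfalso; apply Huv; right; exact Ru.
    + split; assumption.
  - intros [Ru Rv]; split; right; assumption.
Qed.

Lemma fg_right_ideal_ext (I J : A -> Prop) :
  (forall y, I y <-> J y) -> fg_right_ideal mul I -> fg_right_ideal mul J.
Proof.
  intros E [X [HX HI]]; exists X; split.
  - intros x Hx; apply E, HX, Hx.
  - intros y; rewrite <- E; apply HI.
Qed.

Lemma fg_right_ideal_empty : fg_right_ideal mul (fun _ => False).
Proof.
  exists nil; split; [intros x [] | intros y; split; [intros [] | intros [x [[] _]]]].
Qed.

Lemma fg_right_ideal_union (I J : A -> Prop) :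
  fg_right_ideal mul I -> fg_right_ideal mul J ->
  fg_right_ideal mul (fun y => I y \/ J y).
Proof.
  intros [X [HX HI]] [Y [HY HJ]]; exists (X ++ Y); split.
  - intros x Hx; apply in_app_or in Hx as [Hx | Hx]; [left | right]; auto.
  - intros y; split.
    + intros [Hy | Hy]; [apply HI in Hy | apply HJ in Hy]; destruct Hy as [x [Hx Hr]];
        exists x; split; auto; apply in_or_app; auto.
    + intros [x [Hx Hr]]; apply in_app_or in Hx as [Hx | Hx];
        [left; apply HI | right; apply HJ]; eauto.
Qed.

Lemma fg_right_ideal_list_union (F : A -> A -> Prop) (L : list A) :
  (forall x, In x L -> fg_right_ideal mul (F x)) ->
  fg_right_ideal mul (fun y => exists x, In x L /\ F x y).
Proof.
  induction L as [|x0 L IH]; intros HF.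
  - eapply fg_right_ideal_ext; [|apply fg_right_ideal_empty].
    intros y; split; [intros [] | intros [x [[] _]]].
  - eapply fg_right_ideal_ext;
      [|apply (fg_right_ideal_union _ _ (HF x0 (or_introl eq_refl))
                 (IH (fun x Hx => HF x (or_intror Hx))))].
    intros y; split.
    + intros [Hy | [x [Hx Hy]]]; [exists x0 | exists x]; simpl; auto.
    + intros [x [[<- | Hx] Hy]]; [left | right; exists x]; auto.
Qed.

Lemma fg_right_ideal_principal a : fg_right_ideal mul (rmult1 mul a).
Proof.
  exists (a :: nil); split.
  - intros x [<- | []]; left; reflexivity.
  - intros y; split.
    + intros Hy; exists a; split; [left; reflexivity | exact Hy].
    + intros [x [[<- | []] Hr]]; exact Hr.
Qed.

Lemma fg_right_ideal_comparable_meet u v : rmult1 mul v u ->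
  fg_right_ideal mul (fun y => rmult1 mul u y /\ rmult1 mul v y).
Proof.
  intros Hvu; eapply fg_right_ideal_ext; [|apply (fg_right_ideal_principal u)].
  intros y; split; [|tauto].
  intros Hy; split; [exact Hy | exact (rmult1_trans _ _ _ Hvu Hy)].
Qed.

Lemma howson_of_fg_principal_meets :
  (forall u v, fg_right_ideal mul (fun y => rmult1 mul u y /\ rmult1 mul v y)) ->
  right_ideal_Howson mul.
Proof.
  intros Hmeet I J [X [_ HI]] [Y [_ HJ]].
  eapply fg_right_ideal_ext; [|apply (fg_right_ideal_list_union
    (fun x z => exists y, In y Y /\ rmult1 mul x z /\ rmult1 mul y z) X)].
  - intros z; split.
    + intros [x [Hx [y [Hy [Hxz Hyz]]]]]; split; [apply HI | apply HJ]; eauto.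
    + intros [Iz Jz]; apply HI in Iz as [x [Hx Hxz]]; apply HJ in Jz as [y [Hy Hyz]].
      exists x; split; [exact Hx | exists y; auto].
  - intros x _; apply (fg_right_ideal_list_union
      (fun y z => rmult1 mul x z /\ rmult1 mul y z) Y).
    intros y _; apply Hmeet.
Qed.

End Semigroup.

Section Homomorphism.
Variables (S T : Type) (mulS : S -> S -> S) (mulT : T -> T -> T) (phi : S -> T).
Hypothesis hom : is_hom mulS mulT phi.

Lemma hom_rmult1 a x : rmult1 mulS a x -> rmult1 mulT (phi a) (phi x).
Proof.
  intros [-> | [s ->]]; [left; reflexivity | right; exists (phi s); apply hom].
Qed.

Lemma R_incomparable_of_hom a b :
  R_incomparable mulT (phi a) (phi b) -> R_incomparable mulS a b.
Proof. intros [Hba Hab]; split; intros H; [apply Hba | apply Hab]; apply hom_rmult1, H. Qed.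

(* The image of I need not be a right ideal of T, hence the hypothesis on J. *)
Lemma fg_right_ideal_hom_image (I : S -> Prop) (J : T -> Prop) :
  is_right_ideal mulT J -> (forall t, J t <-> exists s, I s /\ phi s = t) ->
  fg_right_ideal mulS I -> fg_right_ideal mulT J.
Proof.
  intros HJ EJ [X [HX HI]].
  assert (JX : forall x, In x X -> J (phi x)) by (intros x Hx; apply EJ; eauto).
  exists (map phi X); split.
  - intros y Hy; apply in_map_iff in Hy as [x [<- Hx]]; auto.
  - intros y; split.
    + intros Hy; apply EJ in Hy as [s [Is <-]]; apply HI in Is as [x [Hx Hxs]].
      exists (phi x); split; [apply in_map, Hx | apply hom_rmult1, Hxs].
    + intros [y' [Hy' Hr]]; apply in_map_iff in Hy' as [x [<- Hx]].
      exact (right_ideal_rmult1 _ _ _ _ _ HJ (JX x Hx) Hr).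
Qed.

End Homomorphism.

Theorem mainTheorem19 (S T : Type) (mulS : S -> S -> S) (mulT : T -> T -> T)
  (assocS : associative_op mulS) (assocT : associative_op mulT)
  (H : forall u v : T, R_incomparable mulT u v ->
     exists (a b : S) (phi : S -> T),
       is_hom mulS mulT phi /\ phi a = u /\ phi b = v /\
       (forall t : T,
          (exists s : S, rmult mulS a s /\ rmult mulS b s /\ phi s = t) <->
          (rmult mulT u t /\ rmult mulT v t))) :
  right_ideal_Howson mulS -> right_ideal_Howson mulT.
Proof.
  intros HowsonS; apply howson_of_fg_principal_meets; intros u v.
  destruct (classic (rmult1 mulT v u)) as [Hvu | Hvu].
  { exact (fg_right_ideal_comparable_meet _ _ assocT _ _ Hvu). }
  destruct (classic (rmult1 mulT u v)) as [Huv | Huv].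
  { eapply fg_right_ideal_ext; [|exact (fg_right_ideal_comparable_meet _ _ assocT _ _ Huv)].
    intros y; tauto. }
  assert (Huv_inc : R_incomparable mulT u v) by (split; assumption).
  destruct (H u v Huv_inc) as [a [b [phi [hom [<- [<- Himage]]]]]].
  pose proof (R_incomparable_of_hom _ _ _ _ _ hom _ _ Huv_inc) as Hab_inc.
  apply (fg_right_ideal_hom_image _ _ _ _ _ hom
           (fun s => rmult mulS a s /\ rmult mulS b s)).
  - intros y t Hy; apply (rmult1_meet_incomparable _ _ _ _ _ Huv_inc) in Hy.
    apply (rmult1_meet_incomparable _ _ _ _ _ Huv_inc), (is_right_ideal_rmult_meet _ _ assocT), Hy.
  - intros t; rewrite (rmult1_meet_incomparable _ _ _ _ _ Huv_inc), <- Himage.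
    firstorder.
  - eapply fg_right_ideal_ext; [|exact (HowsonS _ _ (fg_right_ideal_principal _ mulS a)
                                                 (fg_right_ideal_principal _ mulS b))].
    intros s; apply (rmult1_meet_incomparable _ _ _ _ _ Hab_inc).
Qed.
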